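(* In the Setting below and under the Standing Assumption, let $x\in\mathbb{Q}\cap D$ be such that the Lyapunov exponent $\lambda(x)$ exists. Then for every $p\in\mathbb{Z}$, $$\sigma(x,p)\ge\frac{\max(0,\lambda(x))}{\ln 2}.$$
   Context: Setting. $D\subseteq\mathbb{R}$ is a compact interval and $f:D\to D$ is twice continuously differentiable on $D$ with $f''$ bounded. For $x\in D$ the orbit is $x_0=x$, $x_{n+1}=f(x_n)$. A floating-point number of precision $m$ is a real $s\cdot 2^{e-m}$ with $s,e\in\mathbb{Z}$, $|s|\le 2^m-1$; $rd_m(y)$ denotes rounding of $y$ to a nearest floating-point number of precision $m$. Let $L(a,e):=\sup\{|f'(y)|: y\in[a-e,a+e]\cap D\}$ and fix a function $\bar L$ with $L(a,e)\le\bar L(a,e)\le\min(\bar L_{max},\,L(a,e)+Ke)$ for constants $\bar L_{max},K\ge0$. For $x\in\mathbb{Q}\cap D$ and precision $m\ge1$ the computed sequence is $\hat x_0=rd_m(x)$, $\bar e_0=2^{-m}|\hat x_0|$, $\hat x_{n+1}=rd_m(f(\hat x_n))$, $\bar e_{n+1}=\bar L(\hat x_n,\bar e_n)\bar e_n+2^{-m}|\hat x_{n+1}|$ (all $\hat x_n$ assumed in $D$). For $N\in\mathbb{N}$, $p\in\mathbb{Z}$, $m_{min}(x,N,p)$ is the least $m\ge1$ such that the sequence computed at precision $m$ satisfies $\bar e_n\le\frac{10^{-p}}{1+10^{-p}}|\hat x_n|$ for all $n=0,\dots,N$. $\sigma(x,p):=\limsup_{N\to\infty} m_{min}(x,N,p)/N$.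 Standing Assumption: $x_n\ne0$ for all $n$ and $\lim_{N\to\infty}\mathrm{ld}(\min\{|x_n|:0\le n\le N\})/N=0$, $\mathrm{ld}=\log_2$. The Lyapunov exponent is $\lambda(x):=\lim_{n\to\infty}\frac1n\sum_{k=0}^{n-1}\ln|f'(f^k(x))|$ when the limit exists. *)

From Stdlib Require Import Reals Lra Lia ZArith QArith.
Open Scope R_scope.

Definition inD (a b x : R) : Prop := a <= x <= b.

Definition deriv_on_D (a b : R) (g g' : R -> R) : Prop :=
  forall x, inD a b x ->
    forall eps, 0 < eps -> exists delta, 0 < delta /\
      forall y, inD a b y -> y <> x -> Rabs (y - x) < delta ->
        Rabs ((g y - g x) / (y - x) - g' x) < eps.

Definition cont_on_D (a b : R) (g : R -> R) : Prop :=
  forall x, inD a b x ->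
    forall eps, 0 < eps -> exists delta, 0 < delta /\
      forall y, inD a b y -> Rabs (y - x) < delta -> Rabs (g y - g x) < eps.

Definition isFloat (m : nat) (y : R) : Prop :=
  exists s e : Z, (Z.abs s <= 2 ^ Z.of_nat m - 1)%Z /\
                  y = IZR s * powerRZ 2 (e - Z.of_nat m).

Definition is_rounding (rd : nat -> R -> R) : Prop :=
  forall m y, (1 <= m)%nat ->
    isFloat m (rd m y) /\
    forall z, isFloat m z -> Rabs (rd m y - y) <= Rabs (z - y).

Definition Lset (a b : R) (f' : R -> R) (c e : R) (v : R) : Prop :=
  exists y, c - e <= y <= c + e /\ inD a b y /\ v = Rabs (f' y).

Definition is_Lbar (a b : R) (f' : R -> R) (Lbar : R -> R -> R)
  (Lmax K : R) : Prop :=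
  forall c e, inD a b c -> 0 <= e ->
    forall L, is_lub (Lset a b f' c e) L ->
      L <= Lbar c e /\ Lbar c e <= Rmin Lmax (L + K * e).

Fixpoint comp_seq (f : R -> R) (rd : nat -> R -> R) (Lbar : R -> R -> R)
  (m : nat) (x : R) (n : nat) : R * R :=
  match n with
  | O => (rd m x, / 2 ^ m * Rabs (rd m x))
  | S k => let (xh, eb) := comp_seq f rd Lbar m x k in
           let xh' := rd m (f xh) in
           (xh', Lbar xh eb * eb + / 2 ^ m * Rabs xh')
  end.

Definition xhat f rd Lbar m x n := fst (comp_seq f rd Lbar m x n).
Definition ebar f rd Lbar m x n := snd (comp_seq f rd Lbar m x n).

(** Precision m is sufficient for N steps and p digits. *)
Definition good f rd Lbar (x : R) (N : nat) (p : Z) (m : nat) : Prop :=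
  forall n, (n <= N)%nat ->
    ebar f rd Lbar m x n <=
      powerRZ 10 (- p) / (1 + powerRZ 10 (- p)) * Rabs (xhat f rd Lbar m x n).

Definition is_mmin f rd Lbar (x : R) (N : nat) (p : Z) (m : nat) : Prop :=
  (1 <= m)%nat /\ good f rd Lbar x N p m /\
  forall m', (1 <= m')%nat -> good f rd Lbar x N p m' -> (m <= m')%nat.

(** sigma(x,p) = limsup_N m_min(x,N,p)/N  >=  c   (limsup in [-oo,+oo]):
    for every eps > 0, m_min(x,N,p)/N > c - eps for infinitely many N. *)
Definition sigma_ge f rd Lbar (x : R) (p : Z) (c : R) : Prop :=
  forall eps, 0 < eps -> forall N0 : nat, exists N m, (N0 <= N)%nat /\
    is_mmin f rd Lbar x N p m /\ c - eps < INR m / INR N.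

Fixpoint orbit (f : R -> R) (x : R) (n : nat) : R :=
  match n with O => x | S k => f (orbit f x k) end.

Definition ld (y : R) : R := ln y / ln 2.

Fixpoint min_abs_orbit (f : R -> R) (x : R) (N : nat) : R :=
  match N with
  | O => Rabs x
  | S k => Rmin (min_abs_orbit f x k) (Rabs (orbit f x (S k)))
  end.

Definition standing_assumption (f : R -> R) (x : R) : Prop :=
  (forall n, orbit f x n <> 0) /\
  Un_cv (fun N => ld (min_abs_orbit f x N) / INR N) 0.

(** The Lyapunov exponent of x exists (as a real number) and equals lam.
    The summands ln|f'(x_k)| must be finite, i.e. f'(x_k) <> 0. *)
Definition lyapunov_exponent (f f' : R -> R) (x lam : R) : Prop :=
  (forall k, f' (orbit f x k) <> 0) /\
  Un_cv (fun n => / INR n *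
           sum_f_R0 (fun k => ln (Rabs (f' (orbit f x k)))) (pred n)) lam.

From Stdlib Require Import Reals Lra Lia ZArith QArith Classical Wf_nat.
Open Scope R_scope.

(* The computed error bound ebar_n always encloses the true orbit, so |f'(x_n)| is at
   most Lbar(xhat_n, ebar_n) and ebar_(n+1) >= |f'(x_n)| ebar_n.  Hence
   ebar_N >= 2^(-m) (2/3)|x| prod_(n<N) |f'(x_n)|, while a precision m that is good for
   N steps forces ebar_N <= max(|a|,|b|).  Taking logarithms,
   m ln 2 >= sum_(n<N) ln |f'(x_n)| + O(1) = N lam + o(N); for lam <= 0 the bound
   m/N > -eps is trivial. *)

Lemma deriv_on_D_cont a b g g' : deriv_on_D a b g g' -> cont_on_D a b g.
Proof.
  intros Hg t Ht eps Heps.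
  destruct (Hg t Ht 1 Rlt_0_1) as [d [Hd Hq]].
  assert (Hk : 0 < Rabs (g' t) + 1) by (pose proof (Rabs_pos (g' t)); lra).
  exists (Rmin d (eps / (Rabs (g' t) + 1))); split.
  { apply Rmin_pos; [lra | apply Rdiv_lt_0_compat; lra]. }
  intros y Hy Hyt.
  destruct (Req_dec y t) as [->|Hne]; [rewrite Rminus_diag, Rabs_R0; lra|].
  pose proof (Rmin_l d (eps / (Rabs (g' t) + 1))) as Hmin_l.
  pose proof (Rmin_r d (eps / (Rabs (g' t) + 1))) as Hmin_r.
  specialize (Hq y Hy Hne ltac:(lra)).
  assert (Hsmall : Rabs (y - t) * (Rabs (g' t) + 1) < eps).
  { assert (Hyt' : Rabs (y - t) < eps / (Rabs (g' t) + 1)) by lra.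
    apply (Rmult_lt_compat_r (Rabs (g' t) + 1)) in Hyt'; [|lra].
    unfold Rdiv in Hyt'. rewrite Rmult_assoc, Rinv_l in Hyt'; lra. }
  assert (Hsplit : g y - g t = ((g y - g t) / (y - t) - g' t) * (y - t) + g' t * (y - t))
    by (field; lra).
  rewrite Hsplit.
  eapply Rle_lt_trans; [apply Rabs_triang|]. rewrite !Rabs_mult.
  pose proof (Rabs_pos (y - t)).
  assert (Rabs ((g y - g t) / (y - t) - g' t) * Rabs (y - t) <= Rabs (y - t))
    by (rewrite <- (Rmult_1_l (Rabs (y - t))) at 2; apply Rmult_le_compat_r; lra).
  nra.
Qed.

(* Stdlib's MVT wants continuity at the endpoints as a two-sided property; composing
   with the retraction [clamp] onto D turns one-sided data on D into that. *)
Definition clamp (a b t : R) : R := Rmax a (Rmin b t).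

Lemma clamp_inD a b t : a <= b -> inD a b (clamp a b t).
Proof. intros. unfold clamp, inD, Rmax, Rmin. repeat destruct Rle_dec; lra. Qed.

Lemma clamp_id a b t : inD a b t -> clamp a b t = t.
Proof. unfold clamp, inD, Rmax, Rmin. intros. repeat destruct Rle_dec; lra. Qed.

Lemma clamp_contraction a b s t : Rabs (clamp a b s - clamp a b t) <= Rabs (s - t).
Proof.
  unfold clamp, Rmax, Rmin, Rabs. repeat destruct Rle_dec; repeat destruct Rcase_abs; lra.
Qed.

Lemma continuity_pt_clamp_comp a b g t :
  a <= b -> cont_on_D a b g -> continuity_pt (fun s => g (clamp a b s)) t.
Proof.
  intros Hab Hg eps Heps.
  destruct (Hg (clamp a b t) (clamp_inD a b t Hab) eps Heps) as [d [Hd Hq]].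
  exists d; split; [exact Hd|]. intros y [_ Hy]. simpl in *. unfold R_dist in *.
  apply Hq; [apply clamp_inD; exact Hab|].
  eapply Rle_lt_trans; [apply clamp_contraction | exact Hy].
Qed.

Lemma derivable_pt_lim_clamp_comp a b g g' t : deriv_on_D a b g g' -> a < t < b ->
  derivable_pt_lim (fun s => g (clamp a b s)) t (g' t).
Proof.
  intros Hg Ht eps Heps.
  destruct (Hg t ltac:(unfold inD; lra) eps Heps) as [d [Hd Hq]].
  assert (Hr : 0 < Rmin d (Rmin (t - a) (b - t))) by (repeat apply Rmin_pos; lra).
  exists (mkposreal _ Hr). simpl. intros h Hh Hlt.
  pose proof (Rmin_l d (Rmin (t - a) (b - t))). pose proof (Rmin_r d (Rmin (t - a) (b - t))).
  pose proof (Rmin_l (t - a) (b - t)). pose proof (Rmin_r (t - a) (b - t)).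
  assert (Hth : inD a b (t + h)) by (unfold inD; unfold Rabs in Hlt; destruct Rcase_abs; lra).
  rewrite (clamp_id a b (t + h) Hth), (clamp_id a b t) by (unfold inD; lra).
  specialize (Hq (t + h) Hth ltac:(lra)). replace (t + h - t) with h in Hq by ring.
  apply Hq; lra.
Qed.

Lemma mvt_on_D a b g g' u v : deriv_on_D a b g g' -> inD a b u -> inD a b v -> u < v ->
  exists c, u < c < v /\ g v - g u = g' c * (v - u).
Proof.
  intros Hg Hu Hv Huv.
  assert (Hab : a <= b) by (unfold inD in *; lra).
  set (F := fun s => g (clamp a b s)).
  assert (HF : forall c, u < c < v -> derivable_pt_lim F c (g' c))
    by (intros c Hc; apply derivable_pt_lim_clamp_comp; [exact Hg | unfold inD in *; lra]).
  assert (pr1 : forall c, u < c < v -> derivable_pt F c) by (intros c Hc; exists (g' c); exact (HF c Hc)).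
  assert (pr2 : forall c, u < c < v -> derivable_pt id c) by (intros; apply derivable_pt_id).
  destruct (MVT F id u v pr1 pr2 Huv) as [c [Hc E]].
  - intros c _. apply continuity_pt_clamp_comp; [exact Hab | exact (deriv_on_D_cont _ _ _ _ Hg)].
  - intros c _. apply derivable_continuous_pt, derivable_pt_id.
  - exists c; split; [exact Hc|].
    rewrite (derive_pt_eq_0 F c (g' c) (pr1 c Hc) (HF c Hc)),
      (derive_pt_eq_0 id c 1 (pr2 c Hc) (derivable_pt_lim_id c)) in E.
    unfold F, id in E. rewrite !clamp_id in E by assumption. lra.
Qed.

Lemma lipschitz_on_D a b g g' u v L : deriv_on_D a b g g' -> inD a b u -> inD a b v ->
  (forall w, Rmin u v <= w <= Rmax u v -> Rabs (g' w) <= L) ->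
  Rabs (g u - g v) <= L * Rabs (u - v).
Proof.
  intros Hg Hu Hv HL.
  destruct (Rtotal_order u v) as [Huv|[<-|Huv]].
  - destruct (mvt_on_D a b g g' u v Hg Hu Hv Huv) as [c [Hc E]].
    rewrite Rabs_minus_sym, E, Rabs_mult, (Rabs_minus_sym u v).
    apply Rmult_le_compat_r; [apply Rabs_pos|].
    apply HL. unfold Rmin, Rmax; destruct Rle_dec; lra.
  - rewrite !Rminus_diag, Rabs_R0, Rmult_0_r. apply Rle_refl.
  - destruct (mvt_on_D a b g g' v u Hg Hv Hu Huv) as [c [Hc E]].
    rewrite E, Rabs_mult. apply Rmult_le_compat_r; [apply Rabs_pos|].
    apply HL. unfold Rmin, Rmax; destruct Rle_dec; lra.
Qed.

Lemma deriv_on_D_bounded a b g g' : a <= b -> deriv_on_D a b g g' ->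
  (exists M, forall y, inD a b y -> Rabs (g' y) <= M) ->
  exists B, forall y, inD a b y -> Rabs (g y) <= B.
Proof.
  intros Hab Hg [M HM]. exists (Rabs (g a) + M * (b - a)). intros y Hy.
  assert (Ha : inD a b a) by (unfold inD; lra).
  assert (HM0 : 0 <= M) by (pose proof (HM a Ha); pose proof (Rabs_pos (g' a)); lra).
  assert (Hlip : Rabs (g y - g a) <= M * Rabs (y - a)).
  { apply (lipschitz_on_D a b g g'); auto.
    intros w Hw. apply HM. unfold inD in *. unfold Rmin, Rmax in Hw. destruct Rle_dec; lra. }
  assert (Rabs (y - a) <= b - a) by (unfold inD in Hy; unfold Rabs; destruct Rcase_abs; lra).
  pose proof (Rabs_triang_inv (g y) (g a)).
  assert (M * Rabs (y - a) <= M * (b - a)) by (apply Rmult_le_compat_l; auto).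
  lra.
Qed.

Lemma isFloat_opp m z : isFloat m z -> isFloat m (- z).
Proof.
  intros [s [e [Hs ->]]]. exists (- s)%Z, e. split; [rewrite Z.abs_opp; exact Hs|].
  rewrite opp_IZR. ring.
Qed.

Lemma Zpow2_ge_2 m : (1 <= m)%nat -> (2 <= 2 ^ Z.of_nat m)%Z.
Proof. intros Hm. change 2%Z with (2 ^ 1)%Z at 1. apply Z.pow_le_mono_r; lia. Qed.

Lemma pow2_IZR m : 2 ^ m = IZR (2 ^ Z.of_nat m).
Proof. rewrite <- pow_IZR. reflexivity. Qed.

Lemma isFloat_0 m : (1 <= m)%nat -> isFloat m 0.
Proof.
  intros Hm. exists 0%Z, 0%Z. split; [pose proof (Zpow2_ge_2 m Hm); simpl; lia | simpl; ring].
Qed.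

Lemma isFloat_pow2 m k : (1 <= m)%nat -> isFloat m (powerRZ 2 k).
Proof.
  intros Hm. exists 1%Z, (k + Z.of_nat m)%Z. split; [pose proof (Zpow2_ge_2 m Hm); simpl; lia|].
  replace (k + Z.of_nat m - Z.of_nat m)%Z with k by ring. simpl. ring.
Qed.

(* The grid of step 2^(e-m) up to 2^e: the endpoint needs the mantissa 2^m, which is
   rewritten with exponent e+m. *)
Lemma isFloat_grid m e n : (1 <= m)%nat -> (Z.abs n <= 2 ^ Z.of_nat m)%Z ->
  isFloat m (IZR n * powerRZ 2 (e - Z.of_nat m)).
Proof.
  intros Hm Hn.
  destruct (Z.eq_dec (Z.abs n) (2 ^ Z.of_nat m)) as [Hmax|Hlt].
  - assert (Hpow : IZR (2 ^ Z.of_nat m) * powerRZ 2 (e - Z.of_nat m) = powerRZ 2 e).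
    { rewrite <- pow2_IZR, pow_powerRZ, <- powerRZ_add by lra. f_equal. ring. }
    destruct (Z.abs_spec n) as [[_ Hn']|[_ Hn']]; rewrite Hn' in Hmax.
    + rewrite Hmax, Hpow. now apply isFloat_pow2.
    + replace n with (- 2 ^ Z.of_nat m)%Z by lia.
      rewrite opp_IZR, Ropp_mult_distr_l_reverse, Hpow. now apply isFloat_opp, isFloat_pow2.
  - exists n, e. split; [lia | reflexivity].
Qed.

Lemma binade y : 0 < y -> exists k : Z, powerRZ 2 k <= y < powerRZ 2 (k + 1).
Proof.
  intros Hy. set (r := ln y / ln 2). pose proof ln_lt_2.
  destruct (base_Int_part r) as [H1 H2]. exists (Int_part r).
  rewrite !powerRZ_Rpower by lra. unfold Rpower. rewrite plus_IZR.
  assert (Ey : y = exp (r * ln 2)) by (unfold r; rewrite <- (exp_ln y) at 1 by exact Hy; f_equal; field; lra).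
  rewrite Ey. split.
  - destruct (Req_dec (IZR (Int_part r)) r) as [E|E]; [rewrite E; lra|].
    left. apply exp_increasing. apply Rmult_lt_compat_r; lra.
  - apply exp_increasing. apply Rmult_lt_compat_r; lra.
Qed.

Lemma isFloat_near m k y : (1 <= m)%nat -> Rabs y < powerRZ 2 (k + 1) ->
  exists z, isFloat m z /\ Rabs (z - y) <= / 2 ^ m * powerRZ 2 k.
Proof.
  intros Hm Hy.
  set (t := powerRZ 2 (k + 1 - Z.of_nat m)).
  assert (Ht : 0 < t) by (apply powerRZ_lt; lra).
  assert (Hpm : 0 < 2 ^ m) by (apply pow_lt; lra).
  assert (E1 : powerRZ 2 (k + 1) = t * 2 ^ m).
  { unfold t. rewrite pow_powerRZ, <- powerRZ_add by lra. f_equal; ring. }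
  assert (Ek : powerRZ 2 k = t * 2 ^ m / 2).
  { rewrite <- E1, powerRZ_add by lra. simpl. field. }
  set (u := y / t).
  assert (Hu : - 2 ^ m < u < 2 ^ m).
  { destruct (Rabs_def2 _ _ Hy) as [Hy1 Hy2]. rewrite E1 in Hy1, Hy2. unfold u.
    split; [apply (Rmult_lt_reg_r t) | apply (Rmult_lt_reg_r t)]; auto;
      unfold Rdiv; rewrite Rmult_assoc, Rinv_l; lra. }
  set (n := Int_part (u + / 2)).
  destruct (base_Int_part (u + / 2)) as [Hn1 Hn2]. fold n in Hn1, Hn2.
  assert (Hn : (Z.abs n <= 2 ^ Z.of_nat m)%Z).
  { assert (IZR n < IZR (2 ^ Z.of_nat m + 1)) by (rewrite plus_IZR, <- pow2_IZR; lra).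
    assert (IZR (- 2 ^ Z.of_nat m - 1) < IZR n) by (rewrite minus_IZR, opp_IZR, <- pow2_IZR; lra).
    apply lt_IZR in H. apply lt_IZR in H0. lia. }
  exists (IZR n * t). split; [apply isFloat_grid; assumption|].
  replace (IZR n * t - y) with ((IZR n - u) * t) by (unfold u; field; lra).
  rewrite Rabs_mult, (Rabs_right t) by lra.
  rewrite Ek. replace (/ 2 ^ m * (t * 2 ^ m / 2)) with (/ 2 * t) by (field; lra).
  apply Rmult_le_compat_r; [lra|]. unfold Rabs. destruct Rcase_abs; lra.
Qed.

Lemma isFloat_signed_pow2 m k y : (1 <= m)%nat -> powerRZ 2 k <= Rabs y ->
  exists P, isFloat m P /\ Rabs (P - y) = Rabs y - powerRZ 2 k.
Proof.
  intros Hm Hk. pose proof (powerRZ_lt 2 k ltac:(lra)).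
  destruct (Rle_lt_dec 0 y).
  - exists (powerRZ 2 k). split; [apply isFloat_pow2; exact Hm|].
    rewrite (Rabs_right y) in Hk |- * by lra. rewrite Rabs_left1 by lra. ring.
  - exists (- powerRZ 2 k). split; [apply isFloat_opp, isFloat_pow2; exact Hm|].
    rewrite (Rabs_left y) in Hk |- * by lra. rewrite Rabs_right by lra. ring.
Qed.

(* If 2^k <= |y| < 2^(k+1), the float ±2^k is at distance |y| - 2^k from y, so the
   nearest float has modulus at least 2^k; and the grid of step 2^(k+1-m) puts it
   within 2^(k-m) of y. *)
Lemma rounding_rel_error rd m y : is_rounding rd -> (1 <= m)%nat ->
  Rabs (rd m y - y) <= / 2 ^ m * Rabs (rd m y).
Proof.
  intros Hrd Hm. destruct (Hrd m y Hm) as [_ Hnear].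
  assert (Hinv : 0 < / 2 ^ m) by (apply Rinv_0_lt_compat, pow_lt; lra).
  pose proof (Rabs_pos (rd m y)).
  destruct (Req_dec y 0) as [->|Hy].
  - pose proof (Hnear 0 (isFloat_0 m Hm)). rewrite Rminus_diag, Rabs_R0 in H0.
    pose proof (Rabs_pos (rd m 0 - 0)). nra.
  - destruct (binade (Rabs y) (Rabs_pos_lt y Hy)) as [k [Hk1 Hk2]].
    destruct (isFloat_near m k y Hm Hk2) as [z [Hz Hzy]].
    destruct (isFloat_signed_pow2 m k y Hm Hk1) as [P [HP HPy]].
    pose proof (Hnear z Hz). pose proof (Hnear P HP).
    pose proof (Rabs_triang_inv y (rd m y)) as Htri. rewrite Rabs_minus_sym in Htri.
    assert (/ 2 ^ m * powerRZ 2 k <= / 2 ^ m * Rabs (rd m y))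
      by (apply Rmult_le_compat_l; lra).
    lra.
Qed.

Lemma rounding_abs_lower rd m y : is_rounding rd -> (1 <= m)%nat ->
  2 / 3 * Rabs y <= Rabs (rd m y).
Proof.
  intros Hrd Hm. pose proof (rounding_rel_error rd m y Hrd Hm) as Hrel.
  assert (H2m : 2 <= 2 ^ m) by (replace 2 with (2 ^ 1) at 1 by ring; apply Rle_pow; lra || lia).
  assert (/ 2 ^ m <= / 2) by (apply Rinv_le_contravar; lra).
  pose proof (Rabs_pos (rd m y)).
  assert (/ 2 ^ m * Rabs (rd m y) <= / 2 * Rabs (rd m y)) by (apply Rmult_le_compat_r; lra).
  pose proof (Rabs_triang_inv y (rd m y)) as Htri. rewrite Rabs_minus_sym in Htri. lra.
Qed.

Lemma xhat_0 f rd Lbar m x : xhat f rd Lbar m x 0 = rd m x.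
Proof. reflexivity. Qed.

Lemma ebar_0 f rd Lbar m x : ebar f rd Lbar m x 0 = / 2 ^ m * Rabs (rd m x).
Proof. reflexivity. Qed.

Lemma xhat_S f rd Lbar m x n : xhat f rd Lbar m x (S n) = rd m (f (xhat f rd Lbar m x n)).
Proof. unfold xhat. simpl. destruct (comp_seq f rd Lbar m x n). reflexivity. Qed.

Lemma ebar_S f rd Lbar m x n : ebar f rd Lbar m x (S n) =
  Lbar (xhat f rd Lbar m x n) (ebar f rd Lbar m x n) * ebar f rd Lbar m x n
  + / 2 ^ m * Rabs (xhat f rd Lbar m x (S n)).
Proof. rewrite xhat_S. unfold xhat, ebar. simpl. destruct (comp_seq f rd Lbar m x n). reflexivity. Qed.

Definition abs_bound_D (a b : R) : R := Rmax (Rabs a) (Rabs b).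

Lemma inD_abs_le a b y : inD a b y -> Rabs y <= abs_bound_D a b.
Proof. intros [Hay Hyb]. exact (RmaxAbs a y b Hay Hyb). Qed.

Section LbarBounds.

Variables (a b : R) (f' : R -> R) (Lbar : R -> R -> R) (Lmax K : R).
Hypothesis HLbar : is_Lbar a b f' Lbar Lmax K.
Hypothesis Hf'bd : exists B, forall y, inD a b y -> Rabs (f' y) <= B.

Lemma Lset_has_lub c e : inD a b c -> 0 <= e -> exists L, is_lub (Lset a b f' c e) L.
Proof.
  intros Hc He. destruct Hf'bd as [B HB].
  destruct (completeness (Lset a b f' c e)) as [L HL]; [| |exists L; exact HL].
  - exists B. intros v [y [_ [Hy ->]]]. exact (HB y Hy).
  - exists (Rabs (f' c)), c. split; [lra | split; [exact Hc | reflexivity]].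
Qed.

Lemma Lbar_ge_deriv c e w : inD a b c -> 0 <= e -> c - e <= w <= c + e -> inD a b w ->
  Rabs (f' w) <= Lbar c e.
Proof.
  intros Hc He Hw HwD. destruct (Lset_has_lub c e Hc He) as [L HL].
  destruct (HLbar c e Hc He L HL) as [HLle _].
  assert (Rabs (f' w) <= L) by (apply (proj1 HL); exists w; auto).
  lra.
Qed.

Lemma Lbar_le_Lmax c e : inD a b c -> 0 <= e -> Lbar c e <= Lmax.
Proof.
  intros Hc He. destruct (Lset_has_lub c e Hc He) as [L HL].
  destruct (HLbar c e Hc He L HL) as [_ HLe].
  eapply Rle_trans; [exact HLe | apply Rmin_l].
Qed.

Lemma Lbar_nonneg c e : inD a b c -> 0 <= e -> 0 <= Lbar c e.
Proof.
  intros Hc He. eapply Rle_trans; [apply (Rabs_pos (f' c))|].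
  apply Lbar_ge_deriv; auto; lra.
Qed.

End LbarBounds.

Lemma min_abs_orbit_le f x N n : (n <= N)%nat -> min_abs_orbit f x N <= Rabs (orbit f x n).
Proof.
  induction N as [|N IH]; intros Hn.
  - replace n with 0%nat by lia. simpl. lra.
  - simpl. destruct (Nat.eq_dec n (S N)) as [->|Hne]; [apply Rmin_r|].
    eapply Rle_trans; [apply Rmin_l | apply IH; lia].
Qed.

Lemma min_abs_orbit_pos f x N : (forall n, orbit f x n <> 0) -> 0 < min_abs_orbit f x N.
Proof.
  intros H. induction N as [|N IH]; simpl.
  - apply Rabs_pos_lt, (H 0%nat).
  - apply Rmin_glb_lt; [exact IH | apply Rabs_pos_lt, (H (S N))].
Qed.

Lemma ln_le_compat u v : 0 < u -> u <= v -> ln u <= ln v.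
Proof. intros Hu [Huv|<-]; [left; apply ln_increasing; assumption | right; reflexivity]. Qed.

Lemma pow2_unbounded X : exists m, (1 <= m)%nat /\ X < 2 ^ m.
Proof.
  destruct (INR_unbounded X) as [n Hn]. exists (S n). split; [lia|].
  assert (Hlt : INR (S n) < INR (2 ^ S n)) by (apply lt_INR, Nat.pow_gt_lin_r; lia).
  rewrite pow_INR, S_INR in Hlt. replace (INR 2) with 2 in Hlt by (simpl; ring). lra.
Qed.

Lemma frac_1_add_bounds t : 0 < t -> 0 < t / (1 + t) <= 1.
Proof.
  intros Ht. split; [apply Rdiv_lt_0_compat; lra|].
  apply (Rmult_le_reg_r (1 + t)); [lra|]. unfold Rdiv. rewrite Rmult_assoc, Rinv_l; lra.
Qed.

Section ComputedSequence.

Variables (a b : R) (f f' : R -> R) (rd : nat -> R -> R) (Lbar : R -> R -> R) (Lmax K x : R).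
Hypothesis HfD : forall y, inD a b y -> inD a b (f y).
Hypothesis Hf' : deriv_on_D a b f f'.
Hypothesis Hf'bd : exists B, forall y, inD a b y -> Rabs (f' y) <= B.
Hypothesis Hrd : is_rounding rd.
Hypothesis HLbar : is_Lbar a b f' Lbar Lmax K.
Hypothesis HxD : inD a b x.
Hypothesis HxhatD : forall m n, (1 <= m)%nat -> inD a b (xhat f rd Lbar m x n).
Hypothesis HLmax : 0 <= Lmax.
Hypothesis Horbit_nz : forall n, orbit f x n <> 0.

Lemma orbit_inD n : inD a b (orbit f x n).
Proof. induction n as [|n IH]; simpl; auto. Qed.

Lemma ebar_nonneg m n : (1 <= m)%nat -> 0 <= ebar f rd Lbar m x n.
Proof.
  intros Hm. assert (0 <= / 2 ^ m) by (left; apply Rinv_0_lt_compat, pow_lt; lra).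
  induction n as [|n IH].
  - rewrite ebar_0. pose proof (Rabs_pos (rd m x)). nra.
  - rewrite ebar_S. pose proof (Rabs_pos (xhat f rd Lbar m x (S n))).
    pose proof (Lbar_nonneg a b f' Lbar Lmax K HLbar Hf'bd _ _ (HxhatD m n Hm) IH). nra.
Qed.

Lemma orbit_enclosed m n : (1 <= m)%nat ->
  Rabs (orbit f x n - xhat f rd Lbar m x n) <= ebar f rd Lbar m x n.
Proof.
  intros Hm. induction n as [|n IH].
  - rewrite xhat_0, ebar_0, Rabs_minus_sym. apply rounding_rel_error; assumption.
  - rewrite ebar_S, xhat_S. simpl.
    set (xh := xhat f rd Lbar m x n) in *. set (e := ebar f rd Lbar m x n) in *.
    assert (He : 0 <= e) by apply (ebar_nonneg m n Hm).
    assert (Hxh : inD a b xh) by apply (HxhatD m n Hm).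
    assert (Hlip : Rabs (f (orbit f x n) - f xh) <= Lbar xh e * Rabs (orbit f x n - xh)).
    { apply (lipschitz_on_D a b f f'); auto using orbit_inD.
      intros w Hw. pose proof (orbit_inD n).
      apply (Lbar_ge_deriv a b f' Lbar Lmax K HLbar Hf'bd); auto;
        unfold inD in *; unfold Rmin, Rmax in Hw; destruct Rle_dec;
        unfold Rabs in IH; destruct Rcase_abs; lra. }
    pose proof (rounding_rel_error rd m (f xh) Hrd Hm).
    pose proof (Lbar_nonneg a b f' Lbar Lmax K HLbar Hf'bd xh e Hxh He).
    assert (Lbar xh e * Rabs (orbit f x n - xh) <= Lbar xh e * e) by (apply Rmult_le_compat_l; auto).
    replace (f (orbit f x n) - rd m (f xh)) with ((f (orbit f x n) - f xh) - (rd m (f xh) - f xh)) by ring.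
    eapply Rle_trans; [apply Rabs_triang|]. rewrite Rabs_Ropp. lra.
Qed.

Lemma ebar_step_ge m n : (1 <= m)%nat ->
  ebar f rd Lbar m x n * Rabs (f' (orbit f x n)) <= ebar f rd Lbar m x (S n).
Proof.
  intros Hm. rewrite ebar_S.
  set (xh := xhat f rd Lbar m x n). set (e := ebar f rd Lbar m x n).
  assert (He : 0 <= e) by apply (ebar_nonneg m n Hm).
  assert (Hd : Rabs (f' (orbit f x n)) <= Lbar xh e).
  { pose proof (orbit_enclosed m n Hm) as Hencl. fold xh e in Hencl.
    apply (Lbar_ge_deriv a b f' Lbar Lmax K HLbar Hf'bd);
      [apply HxhatD, Hm | exact He | | apply orbit_inD].
    unfold Rabs in Hencl; destruct Rcase_abs; lra. }
  assert (0 <= / 2 ^ m * Rabs (xhat f rd Lbar m x (S n)))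
    by (apply Rmult_le_pos; [left; apply Rinv_0_lt_compat, pow_lt; lra | apply Rabs_pos]).
  assert (e * Rabs (f' (orbit f x n)) <= e * Lbar xh e) by (apply Rmult_le_compat_l; auto).
  nra.
Qed.

Lemma ebar_ge_exp_log_deriv_sum m n : (1 <= m)%nat -> (forall k, f' (orbit f x k) <> 0) ->
  ebar f rd Lbar m x 0 * exp (sum_f_R0 (fun k => ln (Rabs (f' (orbit f x k)))) n)
  <= ebar f rd Lbar m x (S n).
Proof.
  intros Hm Hnz. induction n as [|n IH]; simpl sum_f_R0.
  - rewrite exp_ln by apply Rabs_pos_lt, (Hnz 0%nat). apply (ebar_step_ge m 0 Hm).
  - rewrite exp_plus, exp_ln by apply Rabs_pos_lt, (Hnz (S n)).
    eapply Rle_trans; [|apply (ebar_step_ge m (S n) Hm)].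
    rewrite <- Rmult_assoc. apply Rmult_le_compat_r; [apply Rabs_pos | exact IH].
Qed.

Lemma ebar_le_geometric m n : (1 <= m)%nat ->
  ebar f rd Lbar m x n <= / 2 ^ m * abs_bound_D a b * (Lmax + 1) ^ n.
Proof.
  intros Hm. assert (H2 : 0 < / 2 ^ m) by (apply Rinv_0_lt_compat, pow_lt; lra).
  assert (HB : 0 <= abs_bound_D a b)
    by (eapply Rle_trans; [apply Rabs_pos | apply inD_abs_le, HxD]).
  assert (Hxh : forall k, / 2 ^ m * Rabs (xhat f rd Lbar m x k) <= / 2 ^ m * abs_bound_D a b)
    by (intros k; apply Rmult_le_compat_l; [lra | apply inD_abs_le, HxhatD, Hm]).
  induction n as [|n IH].
  - rewrite ebar_0, <- (xhat_0 f rd Lbar). simpl. rewrite Rmult_1_r. apply Hxh.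
  - rewrite ebar_S.
    set (xh := xhat f rd Lbar m x n) in *. set (e := ebar f rd Lbar m x n) in *.
    assert (He : 0 <= e) by apply (ebar_nonneg m n Hm).
    pose proof (Lbar_le_Lmax a b f' Lbar Lmax K HLbar Hf'bd xh e (HxhatD m n Hm) He).
    pose proof (pow_R1_Rle (Lmax + 1) n ltac:(lra)).
    assert (Lbar xh e * e <= Lmax * e) by (apply Rmult_le_compat_r; auto).
    assert (Lmax * e <= Lmax * (/ 2 ^ m * abs_bound_D a b * (Lmax + 1) ^ n))
      by (apply Rmult_le_compat_l; auto).
    pose proof (Hxh (S n)).
    assert (0 <= / 2 ^ m * abs_bound_D a b) by nra.
    simpl. nra.
Qed.

(* For large m the error bounds are uniformly small compared with min_(n<=N) |x_n| > 0. *)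
Lemma good_precision_exists N p : exists m, (1 <= m)%nat /\ good f rd Lbar x N p m.
Proof.
  set (c := powerRZ 10 (- p) / (1 + powerRZ 10 (- p))).
  set (d := min_abs_orbit f x N).
  set (C := abs_bound_D a b * (Lmax + 1) ^ N).
  assert (Hc : 0 < c) by exact (proj1 (frac_1_add_bounds _ (powerRZ_lt 10 (- p) ltac:(lra)))).
  assert (Hd : 0 < d) by apply min_abs_orbit_pos, Horbit_nz.
  assert (HC : 0 <= C).
  { apply Rmult_le_pos; [|apply pow_le; lra].
    eapply Rle_trans; [apply Rabs_pos | apply inD_abs_le, HxD]. }
  destruct (pow2_unbounded (C * (1 + c) / (c * d))) as [m [Hm Hlarge]].
  exists m. split; [exact Hm|]. intros n Hn. fold c.
  assert (Hpm : 0 < 2 ^ m) by (apply pow_lt; lra).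
  assert (HCm : C * (1 + c) <= c * d * 2 ^ m).
  { apply (Rmult_lt_compat_r (c * d)) in Hlarge; [|nra].
    unfold Rdiv in Hlarge. rewrite Rmult_assoc, Rinv_l in Hlarge; nra. }
  assert (He : ebar f rd Lbar m x n <= / 2 ^ m * C).
  { eapply Rle_trans; [apply ebar_le_geometric, Hm|]. unfold C. rewrite <- Rmult_assoc.
    apply Rmult_le_compat_l; [apply Rmult_le_pos; [left; apply Rinv_0_lt_compat; lra|]|].
    - eapply Rle_trans; [apply Rabs_pos | apply inD_abs_le, HxD].
    - apply Rle_pow; [lra | exact Hn]. }
  assert (Hsmall : ebar f rd Lbar m x n * (1 + c) <= c * d).
  { apply Rle_trans with (/ 2 ^ m * C * (1 + c)); [apply Rmult_le_compat_r; lra|].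
    apply (Rmult_le_reg_l (2 ^ m)); [exact Hpm|].
    replace (2 ^ m * (/ 2 ^ m * C * (1 + c))) with (C * (1 + c)) by (field; lra). nra. }
  pose proof (orbit_enclosed m n Hm). pose proof (min_abs_orbit_le f x N n Hn) as Hdn.
  pose proof (Rabs_triang_inv (orbit f x n) (xhat f rd Lbar m x n)).
  fold d in Hdn. nra.
Qed.

Lemma mmin_exists N p : exists m, is_mmin f rd Lbar x N p m.
Proof.
  destruct (dec_inh_nat_subset_has_unique_least_element
              (fun m => (1 <= m)%nat /\ good f rd Lbar x N p m))
    as [m [[[Hm Hgood] Hleast] _]].
  - intros n. apply classic.
  - apply good_precision_exists.
  - exists m. split; [exact Hm | split; [exact Hgood|]].
    intros m' Hm' Hgood'. apply Hleast. split; assumption.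
Qed.

Lemma good_precision_log_bound p k m : (1 <= m)%nat -> (forall j, f' (orbit f x j) <> 0) ->
  good f rd Lbar x (S k) p m ->
  ln (2 / 3 * Rabs x) + sum_f_R0 (fun j => ln (Rabs (f' (orbit f x j)))) k
  <= ln (abs_bound_D a b) + INR m * ln 2.
Proof.
  intros Hm Hnz Hgood.
  set (s := sum_f_R0 (fun j => ln (Rabs (f' (orbit f x j)))) k).
  assert (Hx : 0 < Rabs x) by apply Rabs_pos_lt, (Horbit_nz 0%nat).
  assert (Hpm : 0 < 2 ^ m) by (apply pow_lt; lra).
  assert (Hup : ebar f rd Lbar m x (S k) <= abs_bound_D a b).
  { pose proof (Hgood (S k) (le_n _)) as HgN.
    assert (Htol := frac_1_add_bounds (powerRZ 10 (- p)) (powerRZ_lt 10 (- p) ltac:(lra))).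
    pose proof (inD_abs_le a b _ (HxhatD m (S k) Hm)). pose proof (Rabs_pos (xhat f rd Lbar m x (S k))).
    nra. }
  assert (Hlow : / 2 ^ m * (2 / 3 * Rabs x) * exp s <= ebar f rd Lbar m x (S k)).
  { eapply Rle_trans; [|apply (ebar_ge_exp_log_deriv_sum m k Hm Hnz)]. rewrite ebar_0.
    apply Rmult_le_compat_r; [left; apply exp_pos|].
    apply Rmult_le_compat_l; [left; apply Rinv_0_lt_compat, Hpm | apply rounding_abs_lower; assumption]. }
  assert (Hprod : 2 / 3 * Rabs x * exp s <= abs_bound_D a b * 2 ^ m).
  { apply (Rmult_le_reg_l (/ 2 ^ m)); [apply Rinv_0_lt_compat, Hpm|].
    replace (/ 2 ^ m * (abs_bound_D a b * 2 ^ m)) with (abs_bound_D a b) by (field; lra).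
    rewrite <- Rmult_assoc. lra. }
  assert (HB : 0 < abs_bound_D a b)
    by (eapply Rlt_le_trans; [exact Hx | apply inD_abs_le, HxD]).
  apply ln_le_compat in Hprod; [|apply Rmult_lt_0_compat; [lra | apply exp_pos]].
  rewrite (ln_mult (2 / 3 * Rabs x)), ln_exp, (ln_mult (abs_bound_D a b)), ln_pow in Hprod
    by (try apply exp_pos; lra).
  exact Hprod.
Qed.

End ComputedSequence.

Lemma Un_cv_eventually_close (u : nat -> R) lam C eps N0 : Un_cv u lam -> 0 < eps ->
  exists N, (N0 <= N)%nat /\ (0 < N)%nat /\ lam - eps < u N /\ - eps < C / INR N.
Proof.
  intros Hu Heps.
  destruct (Hu eps Heps) as [N1 HN1].
  destruct (INR_unbounded (Rabs C / eps)) as [N2 HN2].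
  set (N := S (N0 + N1 + N2)).
  assert (HN : Rabs C / eps < INR N)
    by (apply Rlt_le_trans with (INR N2); [lra | apply le_INR; unfold N; lia]).
  assert (HNpos : 0 < INR N) by (apply lt_0_INR; unfold N; lia).
  exists N. split; [unfold N; lia | split; [unfold N; lia | split]].
  - specialize (HN1 N ltac:(unfold N; lia)). unfold R_dist in HN1.
    apply Rabs_def2 in HN1. lra.
  - assert (HC : Rabs C < eps * INR N).
    { apply (Rmult_lt_compat_r eps) in HN; [|exact Heps].
      unfold Rdiv in HN. rewrite Rmult_assoc, Rinv_l in HN; lra. }
    apply (Rmult_lt_reg_r (INR N)); [exact HNpos|].
    unfold Rdiv. rewrite Rmult_assoc, Rinv_l by lra.
    apply Rabs_def2 in HC. lra.
Qed.

Lemma Rmax_0_div_lt c r lam eps : 0 < c -> 0 < eps -> lam - eps * c < r * c -> 0 < r ->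
  Rmax 0 lam / c - eps < r.
Proof.
  intros Hc Heps H Hr. unfold Rmax; destruct Rle_dec.
  - apply (Rmult_lt_reg_r c); [exact Hc|].
    replace ((lam / c - eps) * c) with (lam - eps * c) by (field; lra). exact H.
  - unfold Rdiv. rewrite Rmult_0_l. lra.
Qed.

Theorem mainTheorem6
  (a b : R) (f f' f'' : R -> R) (rd : nat -> R -> R)
  (Lbar : R -> R -> R) (Lmax K : R) (x lam : R)
  (Hab : a <= b)
  (HfD : forall y, inD a b y -> inD a b (f y))
  (Hf' : deriv_on_D a b f f')
  (Hf'' : deriv_on_D a b f' f'')
  (Hf''c : cont_on_D a b f'')
  (Hf''b : exists M, forall y, inD a b y -> Rabs (f'' y) <= M)
  (Hrd : is_rounding rd)
  (HLmax : 0 <= Lmax) (HK : 0 <= K)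
  (HLbar : is_Lbar a b f' Lbar Lmax K)
  (HxQ : exists q : Q, x = Q2R q)
  (HxD : inD a b x)
  (HxhatD : forall m n, (1 <= m)%nat -> inD a b (xhat f rd Lbar m x n))
  (HSA : standing_assumption f x)
  (Hlam : lyapunov_exponent f f' x lam) :
  forall p : Z, sigma_ge f rd Lbar x p (Rmax 0 lam / ln 2).
Proof.
  intros p eps Heps N0.
  destruct HSA as [Horbit_nz _]. destruct Hlam as [Hf'nz Hcv].
  pose proof (deriv_on_D_bounded a b f' f'' Hab Hf'' Hf''b) as Hf'bd.
  assert (Hln2 : 0 < ln 2) by (rewrite <- ln_1; apply ln_increasing; lra).
  set (K0 := ln (2 / 3 * Rabs x) - ln (abs_bound_D a b)).
  destruct (Un_cv_eventually_close _ lam K0 (eps * ln 2 / 2) N0 Hcv)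
    as [[|k] [HN0 [HN [Hu HK0]]]]; [nra | lia |].
  destruct (mmin_exists a b f f' rd Lbar Lmax K x HfD Hf' Hf'bd Hrd HLbar HxD HxhatD HLmax
              Horbit_nz (S k) p) as [m Hmm].
  exists (S k), m. split; [exact HN0 | split; [exact Hmm|]].
  destruct Hmm as [Hm [Hgood _]].
  pose proof (good_precision_log_bound a b f f' rd Lbar Lmax K x HfD Hf' Hf'bd Hrd HLbar HxD
                HxhatD Horbit_nz p k m Hm Hf'nz Hgood) as Hlog.
  simpl pred in Hu.
  set (n := INR (S k)) in *. set (s := sum_f_R0 _ k) in *.
  assert (Hn : 0 < / n) by (apply Rinv_0_lt_compat, lt_0_INR; lia).
  assert (Havg : K0 / n + / n * s <= INR m / n * ln 2).
  { unfold Rdiv. rewrite (Rmult_comm K0), <- Rmult_plus_distr_l, (Rmult_comm (INR m)), Rmult_assoc.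
    apply Rmult_le_compat_l; [lra | unfold K0; lra]. }
  apply Rmax_0_div_lt; [exact Hln2 | exact Heps | lra |].
  apply Rdiv_lt_0_compat; apply lt_0_INR; lia.
Qed.
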